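(* Let $\Pi=(\mathcal{S},\mathcal{R})$ be a stably (resp. haltingly) correct CRN protocol (with respect to some interface). Then there exist a runtime policy $\varrho$ and a function $f:\mathbb{Z}_{\ge1}\to\mathbb{R}_{\ge0}$ such that for every integer $n\ge1$, every execution $\eta\in\mathcal{F}(n)$ and every skipping policy $\sigma$, the stabilization runtime $\operatorname{RT}_{\mathrm{stab}}^{\varrho,\sigma}(\eta)$ (resp. halting runtime $\operatorname{RT}_{\mathrm{halt}}^{\varrho,\sigma}(\eta)$) is at most $f(n)$.
   Context: Model. A CRN protocol $\Pi=(\mathcal{S},\mathcal{R})$ has a finite species set $\mathcal{S}$ and finite reaction set $\mathcal{R}\subset\mathbb{N}^{\mathcal{S}}\times\mathbb{N}^{\mathcal{S}}$; each reaction $(\mathbf{r},\mathbf{p})$ has $\|\mathbf{r}\|_1\in\{1,2\}$ and $\|\mathbf{r}\|_1\le\|\mathbf{p}\|_1$; for each $\mathbf{r}$ with $1\le\|\mathbf{r}\|_1\le2$ the set $\mathcal{R}(\mathbf{r})$ of reactions with reactants $\mathbf{r}$ is nonempty; void reactions have $\mathbf{r}=\mathbf{p}$, and if $(\mathbf{r},\mathbf{r})\in\mathcal{R}$ then $\mathcal{R}(\mathbf{r})=\{(\mathbf{r},\mathbf{r})\}$; $\operatorname{NV}(\mathcal{R})$ = non-void reactions. Configurations $\mathbf{c}\in\mathbb{N}^{\mathcal{S}}$ with $\|\mathbf{c}\|_1\ge1$; $(\mathbf{r},\mathbf{p})$ is applicable to $\mathbf{c}$ if $\mathbf{r}\le\mathbf{c}$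 and yields $\mathbf{c}-\mathbf{r}+\mathbf{p}$; $\operatorname{app}(\mathbf{c})$ applicable reactions, $\overline{\operatorname{app}}(\mathbf{c})=\mathcal{R}\setminus\operatorname{app}(\mathbf{c})$; $\stackrel{*}{\rightharpoonup}$ reachability; the protocol respects finite density ($\mathbf{c}\stackrel{*}{\rightharpoonup}\mathbf{c}'\Rightarrow\|\mathbf{c}'\|_1\le O(\|\mathbf{c}\|_1)$). $\mathrm{stab}(Z)=\{\mathbf{c}\in Z:\mathbf{c}\stackrel{*}{\rightharpoonup}\mathbf{c}'\Rightarrow\mathbf{c}'\in Z\}$, $\mathrm{halt}(Z)=\{\mathbf{c}\in Z:\mathbf{c}\stackrel{*}{\rightharpoonup}\mathbf{c}'\Rightarrow\mathbf{c}'=\mathbf{c}\}$. Executions $\eta=\langle\mathbf{c}^t,\alpha^t\rangle_{t\ge0}$ ($\alpha^t\in\operatorname{app}(\mathbf{c}^t)$, $\mathbf{c}^{t+1}=\alpha^t(\mathbf{c}^t)$) are weakly fair if for all $t$ and $\alpha\in\operatorname{app}(\mathbf{c}^t)$ there is $t'\ge t$ with $\alpha^{t'}=\alpha$ or $\alpha\notin\operatorname{app}(\mathbf{c}^{t'})$. An interface $\mathcal{I}=(\mathcal{U},\mu,\mathcal{C})$ ($\mu:\mathcal{S}\to\mathcal{U}$, $\mathcal{C}\subseteq\mathbb{N}^{\mathcal{U}}\times\mathbb{N}^{\mathcal{U}}$, $\mu(\mathbf{c})(u)=\sum_{\mu(A)=u}\mathbf{c}(A)$) gives $Z_{\mathcal{I}}(\mathbf{c}^0)=\{\mathbf{c}:(\mu(\mathbf{c}^0),\mu(\mathbf{c}))\in\mathcal{C}\}$;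 $\mathbf{c}^0$ is valid if this is nonempty; $\Pi$ is stably (haltingly) correct if every weakly fair execution from a valid $\mathbf{c}^0$ reaches $\mathrm{stab}(Z_{\mathcal{I}}(\mathbf{c}^0))$ ($\mathrm{halt}(Z_{\mathcal{I}}(\mathbf{c}^0))$); the first such step is the stabilization (halting) step. Stochastic scheduler. With volume $\varphi>0$, the propensity of $\alpha=(\mathbf{r},\mathbf{p})$ in $\mathbf{c}$ is $\pi_{\mathbf{c}}(\alpha)=\mathbf{c}(A)/|\mathcal{R}(\mathbf{r})|$ if $\mathbf{r}=A$; $\frac1\varphi\binom{\mathbf{c}(A)}{2}/|\mathcal{R}(\mathbf{r})|$ if $\mathbf{r}=2A$; $\frac1\varphi\mathbf{c}(A)\mathbf{c}(B)/|\mathcal{R}(\mathbf{r})|$ if $\mathbf{r}=A+B$, $A\ne B$; $\pi_{\mathbf{c}}(Q)=\sum_{\alpha\in Q}\pi_{\mathbf{c}}(\alpha)$, $\pi_{\mathbf{c}}=\pi_{\mathbf{c}}(\mathcal{R})$. A stochastic execution picks $\alpha^t$ with probability $\pi_{\mathbf{c}^t}(\alpha)/\pi_{\mathbf{c}^t}$; step $t$ has time span $1/\pi_{\mathbf{c}^t}$. The volume is $\varphi=\Theta(n)$ with $n$ the initial molecular count. Runtime. For an execution $\eta$, step $t$ and $Q\subseteq\mathcal{R}$, $\tau(\eta,t,Q)$ is the least $s>t$ with $\alpha^{s-1}\in Q$ or $Q\subseteq\bigcup_{t\le t'\le s}\overline{\operatorname{app}}(\mathbf{c}^{t'})$. A runtime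 policy $\varrho$ maps each configuration $\mathbf{c}$ to $\varrho(\mathbf{c})\subseteq\operatorname{NV}(\mathcal{R})$; a skipping policy $\sigma$ maps each step $t$ to $\sigma(t)\ge t$. Rounds of a weakly fair $\eta$: $t(0)=0$, effective step $t_e(i)=\sigma(t(i))$, effective configuration $\mathbf{e}^i=\mathbf{c}^{t_e(i)}$, $t(i+1)=\tau(\eta,t_e(i),\varrho(\mathbf{e}^i))$. Temporal cost: $\operatorname{TC}^{\varrho}(\mathbf{c})=\mathbb{E}\big[\sum_{t=0}^{\tau(\eta_r,0,\varrho(\mathbf{c}))-1}1/\pi_{\mathbf{c}_r^t}\big]$ for a stochastic execution $\eta_r=\langle\mathbf{c}_r^t,\alpha_r^t\rangle$ from $\mathbf{c}$. The runtime of the prefix of $\eta$ before step $t^*$ is $\sum_{i=0}^{i^*-1}\operatorname{TC}^{\varrho}(\mathbf{e}^i)$ with $i^*=\min\{i:t(i)\ge t^*\}$; $\operatorname{RT}_{\mathrm{stab}}^{\varrho,\sigma}(\eta)$ (resp. $\operatorname{RT}_{\mathrm{halt}}^{\varrho,\sigma}(\eta)$) is this with $t^*$ the stabilization (halting) step. $\mathcal{F}(n)$ is the set of weakly fair executions from valid initial configurations of molecular count $n$. *)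

From HB Require Import structures.
From mathcomp Require Import all_boot all_order all_algebra.
From mathcomp Require Import boolp classical_sets reals ereal topology
  normedtype sequences Rstruct.


Set Implicit Arguments.
Unset Strict Implicit.
Unset Printing Implicit Defensive.
Import Order.TTheory GRing.Theory Num.Theory.

Local Open Scope ring_scope.

Notation R := Rdefinitions.R.

(* Injectivity of (reac,prod) (in [wf_crn]) makes the reactions a set   *)
(* of pairs in N^S x N^S.                                              *)
Record crn := Crn {
  species : finType;
  rxn : finType;
  reac : rxn -> {ffun species -> nat};
  prod : rxn -> {ffun species -> nat}
}.

Definition conf (P : crn) := {ffun species P -> nat}.

Definition csize (P : crn) (c : conf P) : nat := (\sum_(A : species P) c A)%N.

Definition applicable (P : crn) (c : conf P) (a : rxn P) : bool :=
  [forall A, (reac a A <= c A)%N].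

Definition apply_rxn (P : crn) (c : conf P) (a : rxn P) : conf P :=
  [ffun A => (c A - reac a A + prod a A)%N].

Inductive reach (P : crn) : conf P -> conf P -> Prop :=
| reach_refl c : reach c c
| reach_step c a c' : applicable c a -> reach (apply_rxn c a) c' -> reach c c'.

Definition is_void (P : crn) (a : rxn P) : bool := reac a == prod a.

Definition NV (P : crn) : {set rxn P} := [set a | ~~ is_void a].

Definition nreac (P : crn) (r : conf P) : nat := #|[set a : rxn P | reac a == r]|.

Definition wf_crn (P : crn) : Prop :=
  [/\ injective (fun a : rxn P => (reac a, prod a)),
      (forall a : rxn P, (1 <= csize (reac a) <= 2)%N),
      (forall a : rxn P, (csize (reac a) <= csize (prod a))%N),
      (forall r : conf P, (1 <= csize r <= 2)%N -> exists a : rxn P, reac a = r) &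
      (forall a b : rxn P, reac a = prod a -> reac b = reac a -> b = a)].

Definition finite_density (P : crn) : Prop :=
  exists K : nat, forall c c' : conf P, reach c c' -> (csize c' <= K * csize c)%N.

Record exec (P : crn) := Exec { ec : nat -> conf P; ea : nat -> rxn P }.

Definition is_execution (P : crn) (e : exec P) : Prop :=
  forall t, applicable (ec e t) (ea e t) /\ ec e t.+1 = apply_rxn (ec e t) (ea e t).

Definition weakly_fair (P : crn) (e : exec P) : Prop :=
  is_execution e /\
  forall t (a : rxn P), applicable (ec e t) a ->
    exists t', (t <= t')%N /\ (ea e t' = a \/ ~~ applicable (ec e t') a).

Record interface (P : crn) := Interface {
  iU : finType;
  imu : species P -> iU;
  iC : {ffun iU -> nat} -> {ffun iU -> nat} -> Prop
}.

Definition proj (P : crn) (I : interface P) (c : conf P) : {ffun iU I -> nat} :=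
  [ffun u => (\sum_(A | @imu P I A == u) c A)%N].

(* Z_I(c0); configurations have ||c|| >= 1 *)
Definition Zset (P : crn) (I : interface P) (c0 : conf P) (c : conf P) : Prop :=
  (1 <= csize c)%N /\ @iC P I (proj I c0) (proj I c).

Definition valid (P : crn) (I : interface P) (c0 : conf P) : Prop :=
  (1 <= csize c0)%N /\ exists c, Zset I c0 c.

Definition stab (P : crn) (Z : conf P -> Prop) (c : conf P) : Prop :=
  Z c /\ forall c', reach c c' -> Z c'.

Definition halt (P : crn) (Z : conf P -> Prop) (c : conf P) : Prop :=
  Z c /\ forall c', reach c c' -> c' = c.

Definition stably_correct (P : crn) (I : interface P) : Prop :=
  forall e : exec P, weakly_fair e -> valid I (ec e 0) ->
    exists t, stab (Zset I (ec e 0)) (ec e t).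

Definition haltingly_correct (P : crn) (I : interface P) : Prop :=
  forall e : exec P, weakly_fair e -> valid I (ec e 0) ->
    exists t, halt (Zset I (ec e 0)) (ec e t).

Definition first_step (P : crn) (X : conf P -> Prop) (e : exec P) (t : nat) : Prop :=
  X (ec e t) /\ forall t', (t' < t)%N -> ~ X (ec e t').

Definition in_F (P : crn) (I : interface P) (n : nat) (e : exec P) : Prop :=
  weakly_fair e /\ valid I (ec e 0) /\ csize (ec e 0) = n.

(* For ||r||_1 in {1,2}, prod_A binom(c(A), r(A)) equals c(A) if r = A, *)
(* binom(c(A),2) if r = 2A and c(A)c(B) if r = A+B.                     *)
Definition propensity (P : crn) (phi : R) (c : conf P) (a : rxn P) : R :=
  (if csize (reac a) == 1%N then 1 else phi^-1) *
  ((\prod_(A : species P) 'C(c A, reac a A))%N)%:R / (nreac (reac a))%:R.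

Definition total_prop (P : crn) (phi : R) (c : conf P) : R :=
  \sum_(a : rxn P) propensity phi c a.

Definition tau_hit (P : crn) (cs : nat -> conf P) (inQ : nat -> bool)
    (t : nat) (Q : {set rxn P}) (s : nat) : bool :=
  inQ s.-1 ||
  (Q \subset \bigcup_(t <= t' < s.+1) [set a : rxn P | ~~ applicable (cs t') a]).

Definition is_tau (P : crn) (e : exec P) (t : nat) (Q : {set rxn P}) (s : nat) : Prop :=
  let inQ := fun k => ea e k \in Q in
  [/\ (t < s)%N, tau_hit (ec e) inQ t Q s &
      forall s', (t < s' < s)%N -> ~~ tau_hit (ec e) inQ t Q s'].

Fixpoint path_confs (P : crn) (c : conf P) (w : seq (rxn P)) : seq (conf P) :=
  c :: (if w is a :: w' then path_confs (apply_rxn c a) w' else [::]).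

Fixpoint path_prob (P : crn) (phi : R) (c : conf P) (w : seq (rxn P)) : R :=
  if w is a :: w' then
    (if applicable c a then propensity phi c a / total_prop phi c else 0) *
    path_prob phi (apply_rxn c a) w'
  else 1.

(* the event tau(eta_r, 0, Q) > t, t = size w, determined by the prefix *)
Definition alive (P : crn) (c : conf P) (Q : {set rxn P}) (w : seq (rxn P)) : bool :=
  let cs := fun k => nth c (path_confs c w) k in
  let inQ := fun k => if onth w k is Some a then a \in Q else false in
  all (fun s => ~~ tau_hit cs inQ 0 Q s) (iota 1 (size w)).

(* TC^rho(c) = E[ sum_{t < tau(eta_r,0,Q)} 1/pi_{c_r^t} ]
            = sum_t E[ 1{tau > t} / pi_{c_r^t} ]  with Q = rho(c). *)
Definition temporal_cost (P : crn) (phi : R) (Q : {set rxn P}) (c : conf P) : \bar R :=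
  (\sum_(0 <= t <oo)
     ((\sum_(w : t.-tuple (rxn P)) 
        (if alive c Q w
         then path_prob phi c w / total_prop phi (nth c (path_confs c w) t)
         else 0))%:E))%E.

Definition runtime_policy (P : crn) (rho : conf P -> {set rxn P}) : Prop :=
  forall c, rho c \subset NV P.

Definition skipping_policy (sigma : nat -> nat) : Prop :=
  forall t, (t <= sigma t)%N.

Definition is_rounds (P : crn) (rho : conf P -> {set rxn P}) (sigma : nat -> nat)
    (e : exec P) (tr : nat -> nat) : Prop :=
  tr 0 = 0%N /\
  forall i, is_tau e (sigma (tr i)) (rho (ec e (sigma (tr i)))) (tr i.+1).

Definition runtime_le (P : crn) (phi : R) (rho : conf P -> {set rxn P})
    (sigma : nat -> nat) (e : exec P) (tstar : nat) (B : \bar R) : Prop :=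
  forall tr : nat -> nat, is_rounds rho sigma e tr ->
  forall istar : nat,
    (tstar <= tr istar)%N -> (forall i, (i < istar)%N -> (tr i < tstar)%N) ->
    (\sum_(0 <= i < istar)
        temporal_cost phi (rho (ec e (sigma (tr i)))) (ec e (sigma (tr i))) <= B)%E.

Definition volume_linear (vol : nat -> R) : Prop :=
  exists k1 k2 : R, 0 < k1 /\ 0 < k2 /\
    forall n : nat, (1 <= n)%N -> k1 * n%:R <= vol n /\ vol n <= k2 * n%:R.

From HB Require Import structures.
From mathcomp Require Import all_boot all_order all_algebra.
From mathcomp Require Import boolp classical_sets reals ereal topology
  normedtype sequences Rstruct.
From mathcomp Require Import lra.
Import Order.TTheory GRing.Theory Num.Theory.
Local Open Scope ring_scope.

(* Let the runtime policy pick, at a configuration c, a reaction x that is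
   enabled throughout the strongly connected component of c in the
   reachability graph and whose firing leaves that component (and nothing if
   there is none).  Before the stabilization (halting) step such a reaction
   exists: otherwise a cycle inside the component that fires or sees disabled
   every reaction, repeated forever, would be a weakly fair execution that
   never stabilizes (halts).  A round on x ends only once x has fired or been
   disabled, after which the execution never returns to c; hence the
   effective configurations of the rounds before the target step are pairwise
   distinct, and finite density bounds their number by (K n + 1)^|S|.  Each
   round has bounded temporal cost: on configurations of size at most K^2 n the
   scheduler picks x with probability at least some p > 0 and the expected
   duration of a step is bounded, so the cost is dominated by a geometric
   series. *)

Set Implicit Arguments.
Unset Strict Implicit.
Unset Printing Implicit Defensive.

Section Firing.
Variable P : crn.
Implicit Types (c d : conf P) (w : seq (rxn P)) (a x : rxn P).

Fixpoint firable c w : bool :=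
  if w is a :: w' then applicable c a && firable (apply_rxn c a) w' else true.

Definition fire_seq c w : conf P := foldl (@apply_rxn P) c w.

Lemma reach_trans c1 c2 c3 : reach c1 c2 -> reach c2 c3 -> reach c1 c3.
Proof. by elim=> [c|c a c' ca _ IH /IH]; [apply|apply: reach_step ca]. Qed.

Lemma reach_apply c a : applicable c a -> reach c (apply_rxn c a).
Proof. by move=> ca; apply: reach_step ca (reach_refl _). Qed.

Lemma reach_fire_seq c w : firable c w -> reach c (fire_seq c w).
Proof.
elim: w c => [|a w IH] c /=; first by move=> _; apply: reach_refl.
by case/andP=> ca /IH; apply: reach_step.
Qed.

Lemma reach_exists_fire_seq c d :
  reach c d -> exists2 w, firable c w & fire_seq c w = d.
Proof.
elim=> [c'|c' a c'' ca _ [w fw <-]]; first by exists [::].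
by exists (a :: w); rewrite /= ?ca.
Qed.

Lemma firable_cat c w1 w2 :
  firable c (w1 ++ w2) = firable c w1 && firable (fire_seq c w1) w2.
Proof. by elim: w1 c => [|a w IH] c //=; rewrite IH andbA. Qed.

Lemma fire_seq_cat c w1 w2 : fire_seq c (w1 ++ w2) = fire_seq (fire_seq c w1) w2.
Proof. exact: foldl_cat. Qed.

Lemma fire_seq_take_succ c w x j : (j < size w)%N ->
  fire_seq c (take j.+1 w) = apply_rxn (fire_seq c (take j w)) (nth x w j).
Proof. by move=> jw; rewrite (take_nth x jw) /fire_seq foldl_rcons. Qed.

Lemma firable_nth c w x j : firable c w -> (j < size w)%N ->
  applicable (fire_seq c (take j w)) (nth x w j).
Proof.
elim: w c j => [|a w IH] c [|j] //=; first by case/andP.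
by case/andP=> _ /IH; apply.
Qed.

Lemma reach_fire_seq_take c w j :
  firable c w -> reach (fire_seq c (take j w)) (fire_seq c w).
Proof.
rewrite -{1 3}(cat_take_drop j w) firable_cat fire_seq_cat => /andP[_].
exact: reach_fire_seq.
Qed.

Lemma exec_reach (e : exec P) t t' : is_execution e -> (t <= t')%N ->
  reach (ec e t) (ec e t').
Proof.
move=> ex /subnKC <-; elim: (t' - t)%N => [|k IH].
  by rewrite addn0; apply: reach_refl.
rewrite addnS; apply: reach_trans IH _; have [ca ->] := ex (t + k)%N.
exact: reach_apply.
Qed.

End Firing.

Section Splice.
Variable P : crn.
Implicit Types (c : conf P) (L : seq (rxn P)) (x : rxn P).

Fixpoint trajectory c (f : nat -> rxn P) t : conf P :=
  if t is t'.+1 then apply_rxn (trajectory c f t') (f t') else c.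

Definition cyclic_schedule (e : exec P) T L t : rxn P :=
  if (t < T)%N then ea e t else nth (ea e 0) L ((t - T) %% size L).

Definition splice (e : exec P) T L : exec P :=
  Exec (trajectory (ec e 0) (cyclic_schedule e T L)) (cyclic_schedule e T L).

(* A cycle [L] at [c] serves [x] if some of its positions fires [x] or sees
   [x] disabled; the position [size L] stands for [c] again. *)
Definition serves c L x : Prop :=
  exists2 j, (j <= size L)%N &
    ((j < size L)%N && (nth x L j == x)) || ~~ applicable (fire_seq c (take j L)) x.

Lemma serves_catl c L1 L2 x : serves c L1 x -> serves c (L1 ++ L2) x.
Proof.
case=> j jL1 hj; exists j; first by rewrite size_cat (leq_trans jL1) ?leq_addr.
case/orP: hj => [/andP[jlt /eqP nthx]|dis]; last by rewrite takel_cat ?dis ?orbT.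
by rewrite size_cat nth_cat jlt nthx eqxx (leq_trans jlt) ?leq_addr.
Qed.

Lemma serves_catr c L1 L2 x :
  fire_seq c L1 = c -> serves c L2 x -> serves c (L1 ++ L2) x.
Proof.
move=> cycL1 [j jL2 hj]; exists (size L1 + j)%N; first by rewrite size_cat leq_add2l.
rewrite size_cat ltn_add2l nth_cat take_cat.
have -> : (size L1 + j < size L1)%N = false by rewrite ltnNge leq_addr.
by rewrite addKn fire_seq_cat cycL1.
Qed.

Section Cycle.
Variables (e : exec P) (T : nat) (L : seq (rxn P)).
Hypotheses (ex : is_execution e) (fL : firable (ec e T) L)
  (cycL : fire_seq (ec e T) L = ec e T) (L_gt0 : (0 < size L)%N).

Lemma splice_prefix t : (t <= T)%N -> ec (splice e T L) t = ec e t.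
Proof.
elim: t => [|t IH] // tT; have /= -> := IH (ltnW tT).
by rewrite /cyclic_schedule tT; have [_ ->] := ex t.
Qed.

Lemma splice_suffix k :
  ec (splice e T L) (T + k) = fire_seq (ec e T) (take (k %% size L) L).
Proof.
elim: k => [|k IH]; first by rewrite addn0 mod0n take0 splice_prefix.
rewrite addnS /=; move: IH => /= ->.
rewrite /cyclic_schedule ltnNge leq_addr /= addKn.
have kL := ltn_pmod k L_gt0.
have -> : (k.+1 %% size L = (k %% size L).+1 %% size L)%N.
  by rewrite -[(k %% size L).+1]addn1 modnDml addn1.
rewrite -(fire_seq_take_succ _ _ kL).
have [kSL|] := ltnP (k %% size L).+1 (size L); first by rewrite (modn_small kSL).
rewrite leq_eqVlt ltnNge kL orbF => /eqP <-.
by rewrite modnn take0 take_size.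
Qed.

Lemma splice_execution : is_execution (splice e T L).
Proof.
move=> t; split=> //; rewrite [ea _ _]/=; case: (ltnP t T) => [tT|].
  by rewrite splice_prefix ?(ltnW tT) // /cyclic_schedule tT; case: (ex t).
move/subnKC <-; rewrite splice_suffix /cyclic_schedule ltnNge leq_addr /= addKn.
exact/firable_nth/ltn_pmod.
Qed.

Lemma splice_weakly_fair : (forall x, serves (ec e T) L x) ->
  weakly_fair (splice e T L).
Proof.
move=> servL; split; first exact: splice_execution.
move=> t x _; have [j jL hj] := servL x.
exists (T + (t * size L + j))%N; split.
  by rewrite (leq_trans _ (leq_addl _ _)) // (leq_trans _ (leq_addr _ _)) ?leq_pmulr.
case/orP: hj => [/andP[jlt /eqP nthx]|dis].
  left; rewrite /= /cyclic_schedule ltnNge leq_addr /= addKn modnMDl modn_small //.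
  by rewrite (set_nth_default x).
right; rewrite splice_suffix modnMDl.
have [jlt|Lj] := ltnP j (size L); first by rewrite modn_small.
have jL' : j = size L by apply/eqP; rewrite eqn_leq jL Lj.
by move: dis; rewrite jL' modnn take0 take_size cycL.
Qed.

End Cycle.
End Splice.

Lemma mem_bigcup_seq (T : finType) (I : Type) (r : seq I) (F : I -> {set T}) (a : T) :
  (a \in \big[@finset.setU T/finset.set0]_(i <- r) F i) = has (fun i => a \in F i) r.
Proof.
elim: r => [|i r IH]; first by rewrite big_nil finset.in_set0.
by rewrite big_cons finset.in_setU IH.
Qed.

Section Escape.
Variable P : crn.
Implicit Types (c d : conf P) (x : rxn P) (e : exec P).

Definition escaping x c : Prop :=
  forall d, reach c d -> reach d c -> applicable d x /\ ~ reach (apply_rxn d x) c.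

Lemma escaping_NV x c : escaping x c -> x \in NV P.
Proof.
case/(_ c (reach_refl c) (reach_refl c)) => cx; apply: contra_notT.
rewrite inE negbK => /eqP void; suff -> : apply_rxn c x = c by apply: reach_refl.
by apply/ffunP => A; rewrite ffunE -void subnK //; apply: (forallP cx).
Qed.

Lemma cycle_of_not_escaping c x : ~ escaping x c ->
  exists L, [/\ firable c L, fire_seq c L = c & serves c L x].
Proof.
move=> /existsNP[d /not_implyP[cd /not_implyP[dc]]].
have [w1 fw1 w1d] := reach_exists_fire_seq cd.
case dx: (applicable d x); last first.
  have [w2 fw2 w2c] := reach_exists_fire_seq dc; move=> _.
  exists (w1 ++ w2); split.
  - by rewrite firable_cat fw1 w1d.
  - by rewrite fire_seq_cat w1d.
  - exists (size w1); first by rewrite size_cat leq_addr.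
    by rewrite takel_cat // take_size w1d dx orbT.
move=> /not_andP[//|/contrapT xdc].
have [w2 fw2 w2c] := reach_exists_fire_seq xdc.
exists (w1 ++ x :: w2); split.
- by rewrite firable_cat fw1 w1d /= dx.
- by rewrite fire_seq_cat w1d.
- exists (size w1); first by rewrite size_cat leq_addr.
  by rewrite size_cat nth_cat ltnn subnn eqxx addnS ltnS leq_addr.
Qed.

Lemma cycle_of_no_escaping c : (forall x, ~ escaping x c) ->
  exists L, [/\ firable c L, fire_seq c L = c & forall x, serves c L x].
Proof.
move=> noesc; suff [L [fL cL servL]] : exists L,
    [/\ firable c L, fire_seq c L = c & forall x, x \in enum (rxn P) -> serves c L x].
  by exists L; split=> // x; apply/servL; rewrite mem_enum.
elim: (enum _) => [|x xs [L [fL cL servL]]]; first by exists [::]; split.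
have [b [fb cb servb]] := cycle_of_not_escaping (noesc x).
exists (b ++ L); split.
- by rewrite firable_cat fb cb.
- by rewrite fire_seq_cat cb.
- move=> y; rewrite inE => /predU1P[->|/servL]; first exact: serves_catl.
  exact: serves_catr.
Qed.

Definition escape_policy c : {set rxn P} :=
  if [pick x | `[< escaping x c >]] is Some x then [set x] else finset.set0.

Lemma escape_policyP c : escape_policy c = finset.set0 \/
  exists2 x, escape_policy c = [set x] & escaping x c.
Proof.
by rewrite /escape_policy; case: pickP => [x /asboolP|_]; [right; exists x|left].
Qed.

Lemma escape_policy_escaping c x : escaping x c ->
  exists2 y, escape_policy c = [set y] & escaping y c.
Proof.
rewrite /escape_policy; case: pickP => [y /asboolP|none] esc; first by exists y.
by move: (none x); rewrite asboolT.
Qed.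

Lemma escape_runtime_policy : runtime_policy escape_policy.
Proof.
move=> c; case: (escape_policyP c) => [->|[x -> /escaping_NV]].
  exact: finset.sub0set.
by rewrite finset.sub1set.
Qed.

Lemma rounds_mono (rho : conf P -> {set rxn P}) sigma e tr :
  skipping_policy sigma -> is_rounds rho sigma e tr -> {homo tr : i j / (i <= j)%N}.
Proof.
move=> skip [_ rounds]; apply: homo_leq => [//|y x z|i]; first exact: leq_trans.
by have [lt _ _] := rounds i; exact: ltnW (leq_ltn_trans (skip _) lt).
Qed.

Lemma exec_return_component e te t u : is_execution e -> (te <= t <= u)%N ->
  ec e u = ec e te -> reach (ec e te) (ec e t) /\ reach (ec e t) (ec e te).
Proof.
move=> ex /andP[tet tu] back.
by split; last rewrite -back; apply: exec_reach ex _.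
Qed.

Lemma escaping_fired_no_return e te t u x :
  is_execution e -> escaping x (ec e te) -> (te <= t < u)%N -> ea e t = x ->
  ec e u <> ec e te.
Proof.
move=> ex esc /andP[tet tu] fired back.
have [cd dc] := exec_return_component ex (introT andP (conj tet (ltnW tu))) back.
have [_ noret] := esc _ cd dc; apply: noret.
by have [_ step] := ex t; rewrite -fired -step -back; apply: exec_reach ex tu.
Qed.

Lemma escaping_disabled_no_return e te t u x :
  is_execution e -> escaping x (ec e te) -> (te <= t <= u)%N ->
  ~~ applicable (ec e t) x -> ec e u <> ec e te.
Proof.
move=> ex esc tetu /negP disabled back.
have [cd dc] := exec_return_component ex tetu back.
by have [] := esc _ cd dc.
Qed.

(* A round on an escaping reaction ends only once it has fired or been disabled. *)
Lemma escape_round_no_return sigma e tr i j x :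
  is_execution e -> skipping_policy sigma -> is_rounds escape_policy sigma e tr ->
  (i < j)%N -> escape_policy (ec e (sigma (tr i))) = [set x] ->
  escaping x (ec e (sigma (tr i))) -> ec e (sigma (tr j)) <> ec e (sigma (tr i)).
Proof.
move=> ex skip rounds ij pol esc.
have [te_lt hit _] := rounds.2 i; rewrite pol in hit.
have end_le : (tr i.+1 <= sigma (tr j))%N.
  exact: leq_trans (rounds_mono skip rounds ij) (skip _).
case/orP: hit => [/finset.set1P fired|/fintype.subsetP/(_ x (finset.set11 x))].
  have s_gt0 : (0 < tr i.+1)%N by apply: leq_ltn_trans te_lt.
  apply: (escaping_fired_no_return ex esc _ fired).
  by rewrite -ltnS prednK // te_lt (leq_trans _ end_le) // ltn_predL.
rewrite mem_bigcup_seq => /hasP[t]; rewrite mem_index_iota finset.inE ltnS.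
case/andP=> tet tend disabled; apply: (escaping_disabled_no_return ex esc _ disabled).
by rewrite tet (leq_trans tend end_le).
Qed.

Lemma leq_entry_csize c A : (c A <= csize c)%N.
Proof. by rewrite /csize (bigD1 A) //= leq_addr. Qed.

Lemma card_bounded_confs m B (g : 'I_m -> conf P) :
  injective g -> (forall i, csize (g i) <= B)%N -> (m <= B.+1 ^ #|species P|)%N.
Proof.
move=> ginj gB; pose h i : {ffun species P -> 'I_B.+1} := [ffun A => inord (g i A)].
suff /leq_card : injective h by rewrite card_ord card_ffun !card_ord.
move=> i j /ffunP hij; apply/ginj/ffunP => A; have /= := congr1 val (hij A).
by rewrite !ffunE !inordK // ltnS (leq_trans (leq_entry_csize _ _)).
Qed.

Section Target.
Variables (I : interface P) (X : conf P -> conf P -> Prop).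
Hypothesis fair_reaches_X :
  forall e : exec P, weakly_fair e -> valid I (ec e 0) -> exists t, X (ec e 0) (ec e t).
Hypothesis X_closed : forall c0 d c, X c0 d -> reach d c -> X c0 c.

(* Otherwise a cycle through the component of [ec e T] serving every reaction
   yields a weakly fair execution that never reaches [X]. *)
Lemma escaping_exists (e : exec P) T :
  weakly_fair e -> valid I (ec e 0) -> ~ X (ec e 0) (ec e T) ->
  exists x, escaping x (ec e T).
Proof.
move=> [ex _] v notX; apply: contrapT => /forallNP noesc.
have [L [fL cL servL]] := cycle_of_no_escaping noesc.
have L_gt0 : (0 < size L)%N.
  rewrite lt0n; apply/negP => /nilP L0; have [j] := servL (ea e T).
  by rewrite L0 leqn0 => /eqP-> /=; have [-> _] := ex T.
have [t Xt] := fair_reaches_X (splice_weakly_fair ex fL cL L_gt0 servL) v.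
apply/notX/(X_closed Xt); have [tT|Tt] := leqP t T.
  by rewrite splice_prefix //; apply: exec_reach.
rewrite -(subnKC (ltnW Tt)) splice_suffix // -{2}cL.
exact: reach_fire_seq_take.
Qed.

(* The effective configurations of the rounds before the target step are
   pairwise distinct. *)
Lemma escape_rounds_le e sigma tr istar tstar B :
  weakly_fair e -> valid I (ec e 0) -> (forall t, csize (ec e t) <= B)%N ->
  skipping_policy sigma -> is_rounds escape_policy sigma e tr ->
  first_step (X (ec e 0)) e tstar -> (forall i, i < istar -> tr i < tstar)%N ->
  (istar <= B.+1 ^ #|species P|)%N.
Proof.
move=> fair v eB skip rounds [_ notX] before.
have distinct k l : (k < l < istar)%N -> ec e (sigma (tr l)) <> ec e (sigma (tr k)).
  case/andP=> kl lm; have [te_lt _ _] := rounds.2 k.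
  have /notX notXk : (sigma (tr k) < tstar)%N.
    apply: leq_trans te_lt _; apply: leq_trans (rounds_mono skip rounds kl) _.
    exact: ltnW (before _ lm).
  have [x esc] := escaping_exists fair v notXk.
  have [y pol escy] := escape_policy_escaping esc.
  exact: escape_round_no_return fair.1 skip rounds kl pol escy.
apply: (@card_bounded_confs _ B (fun i : 'I_istar => ec e (sigma (tr i)))) => //.
move=> i j eqij.
apply/val_inj/eqP; apply: contraT; rewrite neq_ltn => /orP[ij|ji]; exfalso.
  by apply: (distinct i j) => //; rewrite ij ltn_ord.
by apply: (distinct j i) => //; rewrite ji ltn_ord.
Qed.

End Target.
End Escape.

Lemma sum_tuple_cons (V : nmodType) (T : finType) n (F : n.+1.-tuple T -> V) :
  \sum_(w : n.+1.-tuple T) F w = \sum_(a : T) \sum_(w : n.-tuple T) F [tuple of a :: w].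
Proof.
rewrite pair_big /= (reindex (fun p : T * n.-tuple T => [tuple of p.1 :: p.2])) /=.
  by apply: eq_bigr => -[a w].
exists (fun w : n.+1.-tuple T => (thead w, [tuple of behead w])) => [[a w] _|w _] /=.
  by rewrite theadE; congr pair; apply: val_inj.
by rewrite -tuple_eta.
Qed.

Lemma leq_bin_exp2 n k : ('C(n, k) <= 2 ^ n)%N.
Proof.
elim: n k => [|n IH] [|k] //; first by rewrite bin0 expn_gt0.
by rewrite binS expnS mul2n -addnn leq_add.
Qed.

Section Alive.
Variable P : crn.
Implicit Types (c : conf P) (a x : rxn P) (w : seq (rxn P)) (Q : {set rxn P}).

Definition visited c w k : conf P := nth c (path_confs c w) k.
Definition fired_in Q w k : bool := if onth w k is Some b then b \in Q else false.

Lemma aliveE c Q w :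
  alive c Q w =
  all (fun s => ~~ tau_hit (visited c w) (fired_in Q w) 0 Q s) (iota 1 (size w)).
Proof. by []. Qed.

Lemma size_path_confs c w : size (path_confs c w) = (size w).+1.
Proof. by elim: w c => [|a w IH] c //=; rewrite IH. Qed.

Lemma tau_hit_cons c Q a w s : (0 < s <= size w)%N ->
  tau_hit (visited (apply_rxn c a) w) (fired_in Q w) 0 Q s ->
  tau_hit (visited c (a :: w)) (fired_in Q (a :: w)) 0 Q s.+1.
Proof.
case: s => // s /= sw /orP[fired|disabled]; apply/orP; [by left|right].
apply: fintype.subset_trans disabled _; apply/fintype.subsetP => b.
rewrite !mem_bigcup_seq => /hasP[t]; rewrite mem_index_iota => /andP[_ ts] dis.
apply/hasP; exists t.+1; first by rewrite mem_index_iota.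
move: dis; rewrite !finset.inE /visited /= (set_nth_default (apply_rxn c a)) //.
by rewrite size_path_confs ltnS (leq_trans _ sw).
Qed.

Lemma alive_cons c Q a w : alive c Q (a :: w) ->
  [&& a \notin Q, ~~ (Q \subset [set b | ~~ applicable c b])
    & alive (apply_rxn c a) Q w].
Proof.
rewrite !aliveE /= => /andP[]; rewrite /tau_hit negb_or => /andP[aQ enabled] rest.
apply/and3P; split=> //.
  move: enabled; apply: contra => /fintype.subset_trans; apply.
  apply/fintype.subsetP => b dis.
  by rewrite mem_bigcup_seq; apply/hasP; exists 0%N.
apply/allP => s s_in.
have s1_in : s.+1 \in iota 2 (size w) by move: s_in; rewrite !mem_iota.
move: (allP rest _ s1_in); apply: contra; apply: tau_hit_cons.
by move: s_in; rewrite mem_iota add1n ltnS.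
Qed.

End Alive.

Section Stochastic.
Variables (P : crn) (phi : R).
Hypothesis phi_gt0 : 0 < phi.
Implicit Types (c : conf P) (a x : rxn P) (Q : {set rxn P}).

Definition rxn_bound : R := (#|rxn P|.+1)%:R.
Definition vol_factor a : R := if csize (reac a) == 1%N then 1 else phi^-1.
Definition vol_factor_lb : R := (1 + phi)^-1.
Definition vol_factor_ub : R := 1 + phi^-1.
Definition propensity_lb : R := vol_factor_lb / rxn_bound.
Definition propensity_ub (s : nat) : R := vol_factor_ub * (2 ^ s)%:R.
Definition total_prop_ub (s : nat) : R := rxn_bound * propensity_ub s.

Lemma rxn_bound_ge1 : 1 <= rxn_bound. Proof. by rewrite ler1n. Qed.

Lemma vol_factor_lb_gt0 : 0 < vol_factor_lb.
Proof. by rewrite invr_gt0 addr_gt0. Qed.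

Lemma vol_factor_lb_lt1 : vol_factor_lb < 1.
Proof. by rewrite invf_lt1 ?ltrDl // addr_gt0. Qed.

Lemma vol_factor_ub_ge1 : 1 <= vol_factor_ub.
Proof. by rewrite lerDl invr_ge0 ltW. Qed.

Lemma vol_factor_bounds a : vol_factor_lb <= vol_factor a <= vol_factor_ub.
Proof.
rewrite /vol_factor; case: ifP => _.
  by rewrite ltW ?vol_factor_lb_lt1 ?vol_factor_ub_ge1.
by rewrite lef_pV2 ?posrE ?addr_gt0 // lerDr ?lerDr ler01.
Qed.

Lemma propensity_lb_gt0 : 0 < propensity_lb.
Proof. by rewrite divr_gt0 ?vol_factor_lb_gt0 // (lt_le_trans ltr01 rxn_bound_ge1). Qed.

Lemma propensity_ge0 c a : 0 <= propensity phi c a.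
Proof.
have /andP[lb _] := vol_factor_bounds a.
by rewrite divr_ge0 // mulr_ge0 // (le_trans (ltW vol_factor_lb_gt0) lb).
Qed.

Lemma propensity_disabled c a : ~~ applicable c a -> propensity phi c a = 0.
Proof.
case/forallPn=> A; rewrite -ltnNge => cA.
by rewrite /propensity (bigD1 A) //= bin_small // mul0n mulr0 mul0r.
Qed.

Lemma propensity_ge_lb c a : applicable c a -> propensity_lb <= propensity phi c a.
Proof.
move=> ca; rewrite /propensity -/(vol_factor a).
have /andP[lb _] := vol_factor_bounds a.
have binom_ge1 : 1 <= ((\prod_(A : species P) 'C(c A, reac a A))%N)%:R :> R.
  by rewrite ler1n prodn_gt0 // => A; rewrite bin_gt0 (forallP ca).
have nreac_gt0 : (0 < nreac (reac a))%N.
  by apply/card_gt0P; exists a; rewrite finset.inE.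
have nreac_le : (nreac (reac a))%:R <= rxn_bound.
  by rewrite ler_nat ltnW // ltnS max_card.
rewrite /propensity_lb; apply: ler_pM; last by rewrite lef_pV2 ?posrE ?ltr0n.
- exact: ltW vol_factor_lb_gt0.
- by rewrite invr_ge0 (le_trans ler01 rxn_bound_ge1).
- rewrite -[vol_factor_lb]mulr1; apply: ler_pM; rewrite ?ler01 //.
  exact: ltW vol_factor_lb_gt0.
Qed.

Lemma propensity_le_ub c a : propensity phi c a <= propensity_ub (csize c).
Proof.
have /andP[lb ub] := vol_factor_bounds a.
have f_ge0 : 0 <= vol_factor a by apply: le_trans (ltW vol_factor_lb_gt0) lb.
have binom_le : (\prod_(A : species P) 'C(c A, reac a A) <= 2 ^ csize c)%N.
  by rewrite /csize expn_sum leq_prod // => A _; apply: leq_bin_exp2.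
rewrite /propensity -/(vol_factor a) /propensity_ub.
apply: (@le_trans _ _ (vol_factor a * (\prod_(A : species P) 'C(c A, reac a A))%N%:R)).
  have [->|n_gt0] := posnP (nreac (reac a)); first by rewrite invr0 mulr0 mulr_ge0.
  by rewrite ler_pdivrMr ?ltr0n // ler_peMr ?mulr_ge0 // ler1n.
by apply: ler_pM; rewrite ?ler_nat.
Qed.

Lemma total_prop_ge0 c : 0 <= total_prop phi c.
Proof. by apply: sumr_ge0 => a _; apply: propensity_ge0. Qed.

Lemma propensity_le_total c a : propensity phi c a <= total_prop phi c.
Proof.
rewrite /total_prop (bigD1 a) //= lerDl.
by apply: sumr_ge0 => b _; apply: propensity_ge0.
Qed.

Lemma total_prop_le c : total_prop phi c <= total_prop_ub (csize c).
Proof.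
apply: le_trans (ler_sum _ (fun a _ => propensity_le_ub c a)) _.
rewrite sumr_const -mulr_natl ler_wpM2r ?ler_nat ?card_ord //.
by rewrite mulr_ge0 ?ler0n // (le_trans ler01 vol_factor_ub_ge1).
Qed.

Lemma inv_total_prop_le c : (total_prop phi c)^-1 <= propensity_lb^-1.
Proof.
have [a ca|none] := pickP (applicable c); last first.
  rewrite /total_prop big1 ?invr0 ?invr_ge0 ?ltW ?propensity_lb_gt0 // => a _.
  by rewrite propensity_disabled ?none.
have lb := le_trans (propensity_ge_lb ca) (propensity_le_total c a).
by rewrite lef_pV2 ?posrE ?propensity_lb_gt0 // (lt_le_trans propensity_lb_gt0).
Qed.

Definition choice_prob c a : R :=
  if applicable c a then propensity phi c a / total_prop phi c else 0.

Definition choice_lb (s : nat) : R := propensity_lb / total_prop_ub s.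

Lemma choice_prob_ge0 c a : 0 <= choice_prob c a.
Proof.
rewrite /choice_prob; case: ifP => // _.
by rewrite divr_ge0 ?propensity_ge0 ?total_prop_ge0.
Qed.

Lemma sum_choice_prob_le1 c : \sum_a choice_prob c a <= 1.
Proof.
apply: (@le_trans _ _ (\sum_a propensity phi c a / total_prop phi c)).
  apply: ler_sum => a _; rewrite /choice_prob; case: ifP => // _.
  by rewrite divr_ge0 ?propensity_ge0 ?total_prop_ge0.
rewrite -mulr_suml -/(total_prop phi c).
by have [->|nz] := eqVneq (total_prop phi c) 0; rewrite ?mul0r ?ler01 ?divff.
Qed.

Lemma total_prop_ub_ge1 s : 1 <= total_prop_ub s.
Proof.
by rewrite !mulr_ege1 ?rxn_bound_ge1 ?vol_factor_ub_ge1 // ler1n expn_gt0.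
Qed.

Lemma choice_lb_gt0 s : 0 < choice_lb s.
Proof.
by rewrite divr_gt0 ?propensity_lb_gt0 // (lt_le_trans ltr01 (total_prop_ub_ge1 s)).
Qed.

Lemma choice_lb_lt1 s : choice_lb s < 1.
Proof.
have ub_gt0 := lt_le_trans ltr01 (total_prop_ub_ge1 s).
have rxn_gt0 := lt_le_trans ltr01 rxn_bound_ge1.
rewrite ltr_pdivrMr // mul1r (lt_le_trans _ (total_prop_ub_ge1 s)) //.
by rewrite ltr_pdivrMr // mul1r (lt_le_trans vol_factor_lb_lt1 rxn_bound_ge1).
Qed.

Lemma choice_lb_le c x s : applicable c x -> (csize c <= s)%N ->
  choice_lb s <= choice_prob c x.
Proof.
move=> cx cs; rewrite /choice_prob cx.
have lb := propensity_ge_lb cx.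
have tot_gt0 := lt_le_trans propensity_lb_gt0 (le_trans lb (propensity_le_total c x)).
have tot_le : total_prop phi c <= total_prop_ub s.
  apply: le_trans (total_prop_le c) _.
  rewrite /total_prop_ub ler_wpM2l ?(le_trans ler01 rxn_bound_ge1) //.
  by rewrite ler_wpM2l ?(le_trans ler01 vol_factor_ub_ge1) // ler_nat leq_pexp2l.
apply: ler_pM => //; first exact: ltW propensity_lb_gt0.
  by rewrite invr_ge0 (le_trans ler01 (total_prop_ub_ge1 s)).
by rewrite lef_pV2 ?posrE // (lt_le_trans tot_gt0).
Qed.

Lemma path_prob_cons c a w :
  path_prob phi c (a :: w) = choice_prob c a * path_prob phi (apply_rxn c a) w.
Proof. by []. Qed.

Lemma path_prob_ge0 c w : 0 <= path_prob phi c w.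
Proof.
elim: w c => [|a w IH] c; first exact: ler01.
by rewrite path_prob_cons mulr_ge0 ?choice_prob_ge0.
Qed.

Definition survival_prob c Q t : R :=
  \sum_(w : t.-tuple (rxn P)) if alive c Q w then path_prob phi c w else 0.

Lemma survival_prob0 c Q : survival_prob c Q 0 = 1.
Proof.
rewrite /survival_prob (eq_bigr (fun _ => 1)) ?sumr_const ?card_tuple //.
by case=> -[].
Qed.

Lemma survival_probS_le c Q t : survival_prob c Q t.+1 <= \sum_a
  (if (a \notin Q) && ~~ (Q \subset [set b | ~~ applicable c b])
   then choice_prob c a * survival_prob (apply_rxn c a) Q t else 0).
Proof.
rewrite /survival_prob sum_tuple_cons; apply: ler_sum => a _.
case: ifP => [_|stopped].
  rewrite mulr_sumr; apply: ler_sum => w _ /=; rewrite -/(choice_prob c a).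
  case al: (alive c Q (a :: w)); first by have /and3P[_ _ ->] := alive_cons al.
  by rewrite mulr_ge0 ?choice_prob_ge0 //; case: ifP => // _; apply: path_prob_ge0.
rewrite big1 // => w _ /=; case al: (alive c Q (a :: w)) => //.
by have /and3P[aQ en _] := alive_cons al; rewrite aQ en in stopped.
Qed.

(* As long as the single reaction of [Q] stays enabled, each step fires it with
   probability at least [choice_lb s]. *)
Lemma survival_prob_le c0 Q s t c :
  (forall d, reach c0 d -> (csize d <= s)%N) ->
  (Q = finset.set0 \/ exists x, Q = [set x]) -> reach c0 c ->
  survival_prob c Q t <= (1 - choice_lb s) ^+ t.
Proof.
move=> bounded Q1; elim: t c => [|t IH] c c0c; first by rewrite survival_prob0 expr0.
have q_ge0 : 0 <= 1 - choice_lb s by rewrite subr_ge0 ltW ?choice_lb_lt1.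
apply: le_trans (survival_probS_le _ _ _) _.
case: Q1 IH => [-> _|[x -> IH]].
  by rewrite big1 ?exprn_ge0 // => a _; rewrite finset.sub0set andbF.
rewrite finset.sub1set finset.inE negbK.
case cx: (applicable c x); last by rewrite big1 ?exprn_ge0 // => a _; rewrite andbF.
apply: (@le_trans _ _ (\sum_(a | a != x) choice_prob c a * (1 - choice_lb s) ^+ t)).
  rewrite [leRHS]big_mkcond; apply: ler_sum => a _; rewrite finset.in_set1 andbT.
  case: (a != x) => //; case ca: (applicable c a).
    rewrite ler_wpM2l ?choice_prob_ge0 // IH //.
    exact: reach_trans c0c (reach_apply ca).
  by rewrite /choice_prob ca !mul0r.
rewrite -mulr_suml exprS ler_wpM2r ?exprn_ge0 //.
have := sum_choice_prob_le1 c; rewrite (bigD1 x) //=.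
have := choice_lb_le cx (bounded _ c0c); lra.
Qed.

(* The expected duration of a step is at most [propensity_lb^-1], and the
   number of steps of a round is dominated by a geometric law of parameter
   [choice_lb s]. *)
Definition round_cost (s : nat) : R := propensity_lb^-1 / choice_lb s.

Lemma round_cost_ge0 s : 0 <= round_cost s.
Proof. by rewrite divr_ge0 ?invr_ge0 ?ltW ?propensity_lb_gt0 ?choice_lb_gt0. Qed.

Lemma temporal_cost_le c Q s :
  (forall d, reach c d -> (csize d <= s)%N) ->
  (Q = finset.set0 \/ exists x, Q = [set x]) ->
  (temporal_cost phi Q c <= (round_cost s)%:E)%E.
Proof.
move=> bounded Q1; rewrite /temporal_cost /round_cost.
set B := propensity_lb^-1; set p := choice_lb s.
have p_gt0 : 0 < p := choice_lb_gt0 s.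
have p_lt1 : p < 1 := choice_lb_lt1 s.
pose u t := \sum_(w : t.-tuple (rxn P))
  (if alive c Q w
   then path_prob phi c w / total_prop phi (nth c (path_confs c w) t) else 0).
have u_ge0 t : 0 <= u t.
  apply: sumr_ge0 => w _; case: ifP => // _.
  by rewrite divr_ge0 ?path_prob_ge0 ?total_prop_ge0.
have u_le t : u t <= B * (1 - p) ^+ t.
  apply: le_trans (_ : _ <= B * survival_prob c Q t) _; last first.
    apply: ler_wpM2l; first by rewrite invr_ge0 ltW ?propensity_lb_gt0.
    exact: (survival_prob_le _ bounded Q1 (reach_refl c)).
  rewrite /survival_prob mulr_sumr; apply: ler_sum => w _.
  case: ifP => _; last by rewrite mulr0.
  by rewrite [B * _]mulrC ler_wpM2l ?path_prob_ge0 ?inv_total_prop_le.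
apply: lime_le.
  by apply: is_cvg_ereal_nneg_natsum => t _; rewrite lee_fin; apply: u_ge0.
apply: nearW => n; rewrite sumEFin lee_fin.
rewrite -[X in B / X](subKr 1) -/(series (geometric B (1 - p)) n).
apply: le_trans (geometric_le_lim _ _ _ _); last by rewrite ger0_norm; lra.
- by apply: ler_sum => i _; rewrite /geometric /=; apply: u_le.
- by rewrite invr_ge0 ltW ?propensity_lb_gt0.
- lra.
Qed.

End Stochastic.

Section Runtime.
Variables (P : crn) (I : interface P) (vol : nat -> R) (X : conf P -> conf P -> Prop).
Hypotheses (density : finite_density P) (vol_linear : volume_linear vol).
Hypothesis fair_reaches_X :
  forall e : exec P, weakly_fair e -> valid I (ec e 0) -> exists t, X (ec e 0) (ec e t).
Hypothesis X_closed : forall c0 d c, X c0 d -> reach d c -> X c0 c.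

Lemma escape_policy_runtime_bounded :
  exists (rho : conf P -> {set rxn P}) (f : nat -> R),
    runtime_policy rho /\ (forall n, (1 <= n)%N -> 0 <= f n) /\
    forall n : nat, (1 <= n)%N ->
    forall e : exec P, in_F I n e ->
    forall sigma : nat -> nat, skipping_policy sigma ->
    forall tstar, first_step (X (ec e 0)) e tstar ->
      runtime_le (vol n) rho sigma e tstar (f n)%:E.
Proof.
have [K densK] := density.
have vol_gt0 n : (1 <= n)%N -> 0 < vol n.
  have [k1 [k2 [k1_gt0 [_ vol_bounds]]]] := vol_linear.
  move=> n_gt0; have [+ _] := vol_bounds n n_gt0; apply: lt_le_trans.
  by rewrite mulr_gt0 ?ltr0n.
pose cost n := round_cost P (vol n) (K * (K * n)).
exists (@escape_policy P), (fun n => ((K * n).+1 ^ #|species P|)%:R * cost n).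
split; first exact: escape_runtime_policy.
split=> [n n_gt0|]; first by rewrite mulr_ge0 ?ler0n ?round_cost_ge0 ?vol_gt0.
move=> n n_gt0 e [fair [v e0n]] sigma skip tstar first tr rounds istar _ before.
have eB t : (csize (ec e t) <= K * n)%N.
  by rewrite -e0n densK //; apply: exec_reach fair.1 _.
have istar_le :=
  escape_rounds_le fair_reaches_X X_closed fair v eB skip rounds first before.
apply: (@le_trans _ _ (\sum_(0 <= i < istar) (cost n)%:E)%E).
  apply: lee_sum => i _; apply: temporal_cost_le; first exact: vol_gt0.
    by move=> d /densK /leq_trans; apply; rewrite leq_mul2l eB orbT.
  case: (escape_policyP (ec e (sigma (tr i)))) => [->|[x -> _]]; first by left.
  by right; exists x.
rewrite sumEFin lee_fin sumr_const_nat subn0 -[cost n *+ istar]mulr_natl.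
by rewrite ler_wpM2r ?round_cost_ge0 ?vol_gt0 ?ler_nat.
Qed.

End Runtime.

Lemma stab_reach_closed (P : crn) (Z : conf P -> Prop) d c :
  stab Z d -> reach d c -> stab Z c.
Proof.
move=> [_ stable] dc; split; first exact: stable.
by move=> c' /(reach_trans dc); apply: stable.
Qed.

Lemma halt_reach_closed (P : crn) (Z : conf P -> Prop) d c :
  halt Z d -> reach d c -> halt Z c.
Proof. by move=> haltd dc; rewrite (haltd.2 _ dc). Qed.

Theorem lemma4p2 (P : crn) (I : interface P) (vol : nat -> R) :
  wf_crn P -> finite_density P -> volume_linear vol ->
  (stably_correct I ->
     exists (rho : conf P -> {set rxn P}) (f : nat -> R),
       runtime_policy rho /\ (forall n, (1 <= n)%N -> 0 <= f n) /\
       forall n : nat, (1 <= n)%N ->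
       forall e : exec P, in_F I n e ->
       forall sigma : nat -> nat, skipping_policy sigma ->
       forall tstar, first_step (stab (Zset I (ec e 0))) e tstar ->
         runtime_le (vol n) rho sigma e tstar (f n)%:E)
  /\
  (haltingly_correct I ->
     exists (rho : conf P -> {set rxn P}) (f : nat -> R),
       runtime_policy rho /\ (forall n, (1 <= n)%N -> 0 <= f n) /\
       forall n : nat, (1 <= n)%N ->
       forall e : exec P, in_F I n e ->
       forall sigma : nat -> nat, skipping_policy sigma ->
       forall tstar, first_step (halt (Zset I (ec e 0))) e tstar ->
         runtime_le (vol n) rho sigma e tstar (f n)%:E).
Proof.
move=> _ density vol_linear; split=> correct.
  apply: (@escape_policy_runtime_bounded P I vol (fun c0 => stab (Zset I c0))) => //.
  by move=> c0; apply: stab_reach_closed.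
apply: (@escape_policy_runtime_bounded P I vol (fun c0 => halt (Zset I c0))) => //.
by move=> c0; apply: halt_reach_closed.
Qed.
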